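(* Let $G$ and $H$ be finite simple connected graphs of order at least $3$. If the direct product $G \times H$ is well-dominated, then every minimum dominating set of $G$ and every minimum dominating set of $H$ is an independent set.
   Context: A graph is well-dominated if every minimal (with respect to inclusion) dominating set is a minimum dominating set. The direct product $G\times H$ has vertex set $V(G)\times V(H)$, with $(g_1,h_1)$ adjacent to $(g_2,h_2)$ iff $g_1g_2\in E(G)$ and $h_1h_2\in E(H)$. *)

From mathcomp Require Import all_boot.
Set Implicit Arguments. Unset Strict Implicit. Unset Printing Implicit Defensive.

Definition simple_graph (T : finType) (e : rel T) : Prop :=
  symmetric e /\ irreflexive e.

Definition connected_graph (T : finType) (e : rel T) : Prop :=
  forall x y : T, connect e x y.

Definition dominating (T : finType) (e : rel T) (D : {set T}) : Prop :=
  forall v : T, v \in D \/ exists2 u, u \in D & e v u.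

Definition minimal_dominating (T : finType) (e : rel T) (D : {set T}) : Prop :=
  dominating e D /\ forall D' : {set T}, D' \proper D -> ~ dominating e D'.

Definition minimum_dominating (T : finType) (e : rel T) (D : {set T}) : Prop :=
  dominating e D /\ forall D' : {set T}, dominating e D' -> #|D| <= #|D'|.

Definition well_dominated (T : finType) (e : rel T) : Prop :=
  forall D : {set T}, minimal_dominating e D -> minimum_dominating e D.

Definition independent (T : finType) (e : rel T) (S : {set T}) : Prop :=
  forall u v, u \in S -> v \in S -> ~~ e u v.

Definition direct_prod (T1 T2 : finType) (e1 : rel T1) (e2 : rel T2)
  : rel (T1 * T2)%type :=
  fun x y => e1 x.1 y.1 && e2 x.2 y.2.

(** Suppose a minimum dominating set D of G contains an edge uv.  Any maximal
    independent set I of G gives the minimal dominating set I x V(H) of G x H,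
    so well-domination forces gamma(G x H) = |I| |V(H)| >= |D| |V(H)|.  But if
    x is a vertex of H that is the only neighbour of no vertex, then
    (D x V(H)) \ {(u, x)} still dominates G x H: (u, x) is dominated through
    v.  Such an x exists in every connected graph of order at least 3. *)
From mathcomp Require Import all_boot zify.
Set Implicit Arguments. Unset Strict Implicit.

Section SimpleGraph.

Variables (T : finType) (e : rel T).
Hypothesis e_sym : symmetric e.

Lemma connected_forward_closed (A : {set T}) a :
  connected_graph e -> a \in A ->
  (forall x y, e x y -> x \in A -> y \in A) -> forall y, y \in A.
Proof.
move=> e_conn aA A_closed y.
have A_cl : closed e A := intro_closed (sym_connect_sym e_sym) A_closed.
by have <- := closed_connect A_cl (e_conn a y).
Qed.

Lemma connected_has_neighbour :
  connected_graph e -> 1 < #|T| -> forall x, exists y, e x y.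
Proof.
move=> e_conn /card_gt1P[a [b [_ _ ab]]] x.
have [y xy] : exists y, y != x.
  by case: (eqVneq a x) => [ax|]; [exists b; rewrite -ax eq_sym | exists a].
have /connectP[[|z p] /= xp y_last] := e_conn x y; first by rewrite y_last eqxx in xy.
by case/andP: xp => xz _; exists z.
Qed.

Lemma pendant_neighbour_has_other_neighbour x y :
  connected_graph e -> 2 < #|T| -> (forall z, e x z -> z == y) ->
  exists2 t, e y t & t != x.
Proof.
move=> e_conn T_gt2 x_pendant.
case: (boolP [exists t, e y t && (t != x)]) => [/existsP[t /andP[]] | ].
  by exists t.
rewrite negb_exists => /forallP y_pendant.
have y_nb t : e y t -> t = x.
  by move=> yt; move: (y_pendant t); rewrite yt negbK => /eqP.
have xy_closed a b : e a b -> a \in [set x; y] -> b \in [set x; y].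
  rewrite !inE => ab /orP[] /eqP a_eq; subst a.
    by rewrite (eqP (x_pendant b ab)) eqxx orbT.
  by rewrite (y_nb b ab) eqxx.
have all_xy : [set: T] \subset [set x; y].
  apply/subsetP=> t _.
  exact: connected_forward_closed e_conn (set21 x y) xy_closed t.
suff : #|T| <= 2 by rewrite leqNgt T_gt2.
by rewrite -cardsT (leq_trans (subset_leq_card all_xy)) // cards2; case: (x != y).
Qed.

Lemma exists_never_sole_neighbour :
  connected_graph e -> 2 < #|T| ->
  exists x, forall y, exists2 z, e y z & z != x.
Proof.
move=> e_conn T_gt2; have has_nb := connected_has_neighbour e_conn (ltnW T_gt2).
case: (boolP [exists x, exists y, forall z, e x z ==> (z == y)]); last first.
  rewrite negb_exists => /forallP no_pendant.
  have [x _] : exists x : T, x \in T by apply/card_gt0P; apply: leq_trans T_gt2.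
  exists x => y; move: (no_pendant y); rewrite negb_exists => /forallP/(_ x).
  by rewrite negb_forall => /existsP[z]; rewrite negb_imply => /andP[]; exists z.
case/existsP=> x /existsP[y /forallP /(_ _) /implyP x_pendant].
exists x => w; have [z wz] := has_nb w.
case: (eqVneq z x) => [zx|]; last by exists z.
have -> : w = y by apply/eqP/x_pendant; rewrite e_sym -zx.
exact: pendant_neighbour_has_other_neighbour e_conn T_gt2 x_pendant.
Qed.

End SimpleGraph.

Lemma dominating_imset (T T' : finType) (e : rel T) (e' : rel T')
    (f : T -> T') (g : T' -> T) :
  cancel g f -> (forall x y, e' (f x) (f y) = e x y) ->
  forall D : {set T}, dominating e D -> dominating e' (f @: D).
Proof.
move=> gK f_edge D D_dom v'; rewrite -(gK v').
case: (D_dom (g v')) => [vD | [u uD vu]]; first by left; apply: imset_f.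
by right; exists (f u); [apply: imset_f | rewrite f_edge].
Qed.

Lemma well_dominated_iso (T T' : finType) (e : rel T) (e' : rel T')
    (f : T -> T') (g : T' -> T) :
  cancel f g -> cancel g f -> (forall x y, e' (f x) (f y) = e x y) ->
  well_dominated e -> well_dominated e'.
Proof.
move=> fK gK f_edge e_wd D' [D'_dom D'_min].
have g_edge x' y' : e (g x') (g y') = e' x' y' by rewrite -f_edge !gK.
have g_inj := can_inj gK.
have gD_minl : minimal_dominating e (g @: D').
  split=> [|C C_proper C_dom]; first exact: dominating_imset fK g_edge _ D'_dom.
  apply: (D'_min (f @: C)); last exact: dominating_imset gK f_edge _ C_dom.
  have -> : D' = f @: (g @: D') by rewrite -imset_comp (eq_imset _ gK) imset_id.
  by apply: imset_proper => //; apply: in2W (can_inj fK).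
have [_ gD_min] := e_wd _ gD_minl; split=> // C' C'_dom.
rewrite -(card_imset _ g_inj) -(card_imset C' g_inj).
exact/gD_min/(dominating_imset fK g_edge).
Qed.

Lemma exists_independent_dominating (T : finType) (e : rel T) :
  simple_graph e -> exists I : {set T}, independent e I /\ dominating e I.
Proof.
move=> [e_sym e_irr].
pose indepb (I : {set T}) := [forall u in I, forall v in I, ~~ e u v].
have indepP I : reflect (independent e I) (indepb I).
  apply: (iffP forall_inP) => [I_ind u v uI vI | I_ind u uI].
    by move/forall_inP: (I_ind u uI); apply.
  by apply/forall_inP => v; apply: I_ind.
have indep0 : indepb set0 by apply/forall_inP => u; rewrite inE.
have [I /maxsetP[/indepP I_ind I_max] _] := maxset_exists indep0.
exists I; split=> // v.
case: (boolP [exists u in I, e v u]) => [/exists_inP[u uI vu] | /exists_inP no_nb].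
  by right; exists u.
left; rewrite -(I_max (v |: I)) ?subsetUr ?setU11 //.
apply/indepP => a b; rewrite !inE => /predU1P[-> | aI] /predU1P[-> | bI].
- by rewrite e_irr.
- by apply/negP => vb; apply: no_nb; exists b.
- by rewrite e_sym; apply/negP => va; apply: no_nb; exists a.
- exact: I_ind.
Qed.

Section DirectProduct.

Variables (T1 T2 : finType) (e1 : rel T1) (e2 : rel T2).
Hypothesis e2_has_neighbour : forall h, exists z, e2 h z.

Local Notation e := (direct_prod e1 e2).

Lemma dominating_setXT (A : {set T1}) :
  dominating e1 A -> dominating e (setX A [set: T2]).
Proof.
move=> A_dom [a h]; case: (A_dom a) => [aA | [i iA ai]].
  by left; rewrite !inE aA.
have [z hz] := e2_has_neighbour h.
by right; exists (i, z); rewrite ?inE ?iA //= /direct_prod ai hz.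
Qed.

Lemma minimal_dominating_setXT (I : {set T1}) :
  independent e1 I -> dominating e1 I -> minimal_dominating e (setX I [set: T2]).
Proof.
move=> I_ind I_dom; split=> [|C /properP[C_sub [q qI qC]] C_dom].
  exact: dominating_setXT.
case: (C_dom q) => [|[r rC]]; first by rewrite (negPf qC).
have := subsetP C_sub r rC; rewrite !inE andbT in qI * => /andP[rI _].
by rewrite /direct_prod (negPf (I_ind _ _ qI rI)).
Qed.

Lemma dominating_setXT_del (D : {set T1}) u v x :
  irreflexive e1 -> (forall h, exists2 z, e2 h z & z != x) ->
  dominating e1 D -> u \in D -> v \in D -> e1 u v ->
  dominating e (setX D [set: T2] :\ (u, x)).
Proof.
move=> e1_irr x_spare D_dom uD vD uv [a h].
case: (boolP (a \in D)) => aD.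
  case: (eqVneq (a, h) (u, x)) => [[-> ->] | ax]; last first.
    by left; rewrite !inE ax aD.
  have [z xz] := e2_has_neighbour x.
  right; exists (v, z); last by rewrite /direct_prod /= uv xz.
  have vu : v != u by apply/eqP => vu; rewrite vu e1_irr in uv.
  by rewrite !inE vD andbT xpair_eqE negb_and vu.
case: (D_dom a) => [| [d dD ad]]; first by rewrite (negPf aD).
have [z hz zx] := x_spare h.
right; exists (d, z); last by rewrite /direct_prod /= ad hz.
by rewrite !inE dD andbT xpair_eqE negb_and zx orbT.
Qed.

Lemma minimum_dominating_independent x :
  simple_graph e1 -> (forall h, exists2 z, e2 h z & z != x) ->
  well_dominated e ->
  forall D : {set T1}, minimum_dominating e1 D -> independent e1 D.
Proof.
move=> e1_simple x_spare e_wd D [D_dom D_min] u v uD vD; apply/negP => uv.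
have [I [I_ind I_dom]] := exists_independent_dominating e1_simple.
have [_ IT_min] := e_wd _ (minimal_dominating_setXT I_ind I_dom).
have := IT_min _ (dominating_setXT_del e1_simple.2 x_spare D_dom uD vD uv).
have ux_in : (u, x) \in setX D [set: T2] by rewrite !inE uD.
have := cardsD1 (u, x) (setX D [set: T2]); rewrite ux_in !cardsX cardsT.
have := D_min _ I_dom; nia.
Qed.

End DirectProduct.

Theorem corollary12 (T1 T2 : finType) (e1 : rel T1) (e2 : rel T2) :
  simple_graph e1 -> simple_graph e2 ->
  connected_graph e1 -> connected_graph e2 ->
  3 <= #|T1| -> 3 <= #|T2| ->
  well_dominated (direct_prod e1 e2) ->
  (forall D : {set T1}, minimum_dominating e1 D -> independent e1 D) /\
  (forall D : {set T2}, minimum_dominating e2 D -> independent e2 D).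
Proof.
move=> [e1_sym e1_irr] [e2_sym e2_irr] e1_conn e2_conn T1_gt2 T2_gt2 e_wd.
have [x1 x1_spare] := exists_never_sole_neighbour e1_sym e1_conn T1_gt2.
have [x2 x2_spare] := exists_never_sole_neighbour e2_sym e2_conn T2_gt2.
have e1_nb := connected_has_neighbour e1_conn (ltnW T1_gt2).
have e2_nb := connected_has_neighbour e2_conn (ltnW T2_gt2).
have swap_wd : well_dominated (direct_prod e2 e1).
  apply: (well_dominated_iso (f := fun p => (p.2, p.1)) (g := fun p => (p.2, p.1))) e_wd.
  - by case.
  - by case.
  - by move=> p q; rewrite /direct_prod andbC.
split.
- exact: minimum_dominating_independent e2_nb x2 (conj e1_sym e1_irr) x2_spare e_wd.
- exact: minimum_dominating_independent e1_nb x1 (conj e2_sym e2_irr) x1_spare swap_wd.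
Qed.
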